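(* Let $n,m,j,k$ be positive integers with $m\leq2^{n+1}$ and $j,k\leq\left\lfloor\frac{m+1}{4}\right\rfloor$. Then the equation $$(1-2^n)x+(2j-1)2^y=(2k-1)2^z$$ has no integer solutions with $x>0$, $0\leq y<\left\lfloor\log_2\left(\frac{m-1}{2j-1}\right)\right\rfloor$, and $z\geq0$. *)

From Stdlib Require Import Reals ZArith Lia Lra.
Open Scope R_scope.

(* floor(log_2 q) for a real q > 0 (junk value for q <= 0). *)
Definition floor_log2 (q : R) : Z := Int_part (ln q / ln 2).

(* Since [m <= 2^(n+1)], the bound on [y] forces [2 (2j-1) 2^y <= m - 1 < 2^(n+1)], hence
   [(2j-1) 2^y < 2^n].  With [x >= 1] the left-hand side is then at most
   [1 - 2^n + (2j-1) 2^y <= 0], while the right-hand side is a positive integer. *)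

From Stdlib Require Import Reals ZArith Lia Lra.

Lemma pow2_le_of_lt_floor_log2 (q : R) (y : nat) :
  (Z.of_nat y < floor_log2 q)%Z -> 2 ^ S y <= q.
Proof.
  unfold floor_log2; intros Hy.
  assert (Hln2 : 0 < ln 2) by (rewrite <- ln_1; apply ln_increasing; lra).
  assert (Hpow : 0 < 2 ^ S y) by (apply pow_lt; lra).
  assert (Hexp : ln (2 ^ S y) <= ln q).
  { rewrite ln_pow by lra.
    assert (Hratio : INR (S y) <= ln q / ln 2).
    { destruct (base_Int_part (ln q / ln 2)) as [Hfloor _].
      rewrite INR_IZR_INZ; apply Rle_trans with (2 := Hfloor), IZR_le; lia. }
    apply (Rmult_le_compat_r (ln 2)) in Hratio; [|lra].
    unfold Rdiv in Hratio; rewrite Rmult_assoc, Rinv_l in Hratio; lra. }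
  destruct (Rlt_dec 0 q) as [Hq | Hq].
  - destruct (Rle_lt_dec (2 ^ S y) q) as [|Hlt]; [assumption|].
    pose proof (ln_increasing _ _ Hq Hlt); lra.
  - (* [ln] is [0] on nonpositive arguments, but [ln (2 ^ S y) > 0]. *)
    exfalso.
    assert (Hln0 : ln q = 0) by (unfold ln; destruct (Rlt_dec 0 q); easy).
    rewrite ln_pow in Hexp by lra.
    assert (0 < INR (S y) * ln 2) by (apply Rmult_lt_0_compat; [apply lt_0_INR; lia | lra]).
    lra.
Qed.

Lemma pow2_mul_le_of_lt_floor_log2 (M d y : nat) : (0 < d)%nat ->
  (Z.of_nat y < floor_log2 (INR M / INR d))%Z -> (2 ^ S y * d <= M)%nat.
Proof.
  intros Hd Hy.
  apply pow2_le_of_lt_floor_log2 in Hy.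
  assert (Hd' : 0 < INR d) by (apply lt_0_INR; exact Hd).
  apply INR_le; rewrite mult_INR, pow_INR.
  apply (Rmult_le_compat_r (INR d)) in Hy; [|lra].
  unfold Rdiv in Hy; rewrite Rmult_assoc, Rinv_l in Hy by lra.
  replace (INR 2) with 2 by (simpl; lra); lra.
Qed.

Theorem lemma4p5 (n m j k : nat) (x : Z) (y z : nat) :
  (1 <= n)%nat -> (1 <= m)%nat -> (1 <= j)%nat -> (1 <= k)%nat ->
  (m <= 2 ^ (n + 1))%nat ->
  (j <= (m + 1) / 4)%nat -> (k <= (m + 1) / 4)%nat ->
  (0 < x)%Z ->
  (Z.of_nat y < floor_log2 (INR (m - 1) / INR (2 * j - 1)))%Z ->
  ((1 - 2 ^ Z.of_nat n) * x + (2 * Z.of_nat j - 1) * 2 ^ Z.of_nat y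
     <> (2 * Z.of_nat k - 1) * 2 ^ Z.of_nat z)%Z.
Proof.
  intros _ Hm Hj Hk Hmn _ _ Hx Hy.
  apply pow2_mul_le_of_lt_floor_log2 in Hy; [|lia].
  rewrite Nat.pow_succ_r' in Hy; rewrite Nat.pow_add_r, Nat.pow_1_r in Hmn.
  pose proof (Nat.pow_nonzero 2 n ltac:(lia)).
  pose proof (Nat.pow_nonzero 2 z ltac:(lia)).
  rewrite <- !(Nat2Z.inj_pow 2).
  set (P := (2 ^ y)%nat) in *; set (Q := (2 ^ n)%nat) in *; set (W := (2 ^ z)%nat) in *.
  assert (Hodd : (Z.of_nat P * (2 * Z.of_nat j - 1) <= Z.of_nat Q - 1)%Z) by lia.
  assert (Hlhs : ((1 - Z.of_nat Q) * x + (2 * Z.of_nat j - 1) * Z.of_nat P <= 0)%Z) by nia.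
  assert (Hrhs : (1 <= (2 * Z.of_nat k - 1) * Z.of_nat W)%Z) by nia.
  lia.
Qed.
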